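(* Let $m\ge 3$, $H=B(l_1,\ldots,l_m)$ and $G=H^2$. Then $G$ is equitably $k$-choosable for every $k\ge m+3$.
   Context: All graphs are finite and simple. For $m,l_1,\ldots,l_m\in\mathbb{N}$ with $l_1\le\cdots\le l_m$, $B(l_1,\ldots,l_m)$ is the graph with vertex set $\{u\}\cup\{v_{i,j}: i\in[m], j\in[l_i]\}$ in which, for each $i\in[m]$, consecutive vertices in the sequence $u, v_{i,1},\ldots,v_{i,l_i}$ are adjacent (and there are no other edges). For a graph $H$, $H^2$ has vertex set $V(H)$ with two vertices adjacent iff their distance in $H$ is 1 or 2. A $k$-assignment $L$ assigns to each vertex a set of exactly $k$ colors; an equitable $L$-coloring of $G$ is a proper coloring $f$ with $f(v)\in L(v)$ such that no color is used more than $\lceil |V(G)|/k\rceil$ times; $G$ is equitably $k$-choosable if it has an equitable $L$-coloring for every $k$-assignment $L$. *)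

From mathcomp Require Import all_boot.
Set Implicit Arguments. Unset Strict Implicit. Unset Printing Implicit Defensive.

(* Vertex set of B(l_1,...,l_m): None = u, Some (Tagged i j) = v_{i, j+1}
   (j : 'I_(l i) is 0-based, so it represents index j+1 in [l_i]). *)
Definition spider_vertex (m : nat) (l : 'I_m -> nat) : finType :=
  option {i : 'I_m & 'I_(l i)}.

Definition spider_adj (m : nat) (l : 'I_m -> nat) : rel (spider_vertex l) :=
  fun x y =>
    match x, y with
    | None, None => false
    | None, Some q => nat_of_ord (tagged q) == 0
    | Some p, None => nat_of_ord (tagged p) == 0
    | Some p, Some q =>
        (tag p == tag q) &&
        (((tagged p).+1 == tagged q :> nat) || ((tagged q).+1 == tagged p :> nat))
    end.

Definition graph_sq (T : finType) (e : rel T) : rel T :=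
  fun x y => (x != y) && (e x y || [exists z, e x z && e z y]).

Definition k_assignment (T : finType) (k : nat) (L : T -> seq nat) : Prop :=
  forall v, uniq (L v) /\ size (L v) = k.

Definition ceil_div (n k : nat) : nat := (n + k.-1) %/ k.

Definition equitable_L_coloring (T : finType) (e : rel T) (k : nat)
    (L : T -> seq nat) (f : T -> nat) : Prop :=
  (forall x y, e x y -> f x != f y) /\
  (forall v, f v \in L v) /\
  (forall c : nat, #|[set v | f v == c]| <= ceil_div #|T| k).

Definition equitably_k_choosable (T : finType) (e : rel T) (k : nat) : Prop :=
  forall L : T -> seq nat, k_assignment k L ->
    exists f : T -> nat, equitable_L_coloring e k L f.

From mathcomp Require Import all_boot zify.
Set Implicit Arguments. Unset Strict Implicit. Unset Printing Implicit Defensive.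

(* Equitable choosability of squares of spiders, by a bandwidth argument.

   Suppose the vertices of a graph can be injectively placed on
   the integer line so that adjacent vertices are less than k apart.  Listing
   the vertices in the order of their positions (their ranks) keeps adjacent
   vertices less than k apart in the list.  Colour the list greedily, giving
   each vertex a colour of its list different from the colours of the k-1
   preceding vertices; this is possible since lists have k colours.  Then any
   k consecutive vertices get distinct colours, so the colouring is proper
   and each colour class meets every block of k consecutive positions at
   most once, i.e. has at most ceil(n/k) elements.

   Put the centre u in the middle of the line, send the legs
   1..ceil(m/2) to the right and the others to the left, and interleave the
   legs going to the same side in ceil(m/2) lanes: the j-th vertex of a leg
   in lane c is at distance (j-1)*ceil(m/2) + c + 1 from u.  Adjacent spider
   vertices are then at most ceil(m/2) apart, so adjacent vertices of the
   square are at most 2*ceil(m/2) <= m+1 < k apart. *)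

Lemma card_le_bounded_inj (T : finType) (A : {pred T}) (h : T -> nat) (b : nat) :
  {in A &, injective h} -> (forall x, x \in A -> h x < b) -> #|A| <= b.
Proof.
move=> hinj hb; rewrite cardE -(size_map h) -[b](size_iota 0).
apply: uniq_leq_size.
  rewrite map_inj_in_uniq ?enum_uniq // => x y; rewrite !mem_enum; exact: hinj.
move=> y /mapP [x]; rewrite mem_enum => xA ->; rewrite mem_iota /= add0n; exact: hb.
Qed.

Section Rank.
Variables (T : finType) (code : T -> nat).
Hypothesis code_inj : injective code.

Definition rank (x : T) : nat := #|[set y | code y < code x]|.

Lemma rank_lt x : rank x < #|T|.
Proof.
rewrite /rank -cardsT; apply: proper_card; rewrite properT; apply/eqP => all_below.
have : x \in [set y | code y < code x] by rewrite all_below inE.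
by rewrite inE ltnn.
Qed.

Lemma ltn_rank x y : (rank x < rank y) = (code x < code y).
Proof.
have mono a b : code a < code b -> rank a < rank b.
  move=> lt_ab; apply: proper_card; apply/properP; split.
    apply/subsetP => z; rewrite !inE => lt_za; exact: ltn_trans lt_za lt_ab.
  by exists a; rewrite !inE ?lt_ab ?ltnn.
case: (ltngtP (code x) (code y)) => [/mono -> // | /mono lt_yx | /code_inj -> ].
  by apply/negbTE; rewrite -leqNgt ltnW.
by rewrite ltnn.
Qed.

Lemma rank_inj : injective rank.
Proof.
move=> x y eq_r; apply: code_inj.
by case: (ltngtP (code x) (code y)) => // lt; rewrite -ltn_rank eq_r ltnn in lt.
Qed.

Lemma rank_span x y : code y < code x -> rank x <= rank y + (code x - code y).
Proof.
move=> lt_yx.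
have split_below : [set z | code z < code x] \subset
   [set z | code z < code y] :|: [set z | code y <= code z < code x].
  by apply/subsetP => z; rewrite !inE => ->; rewrite andbT; case: ltnP.
rewrite /rank; apply: (leq_trans (subset_leq_card split_below)).
rewrite cardsU; apply: (leq_trans (leq_subr _ _)); rewrite leq_add2l.
apply: (@card_le_bounded_inj _ _ (fun z => code z - code y)).
  move=> a b; rewrite !inE => /andP [a1 a2] /andP [b1 b2] eq_ab.
  apply: code_inj; lia.
by move=> a; rewrite inE => /andP [a1 a2]; lia.
Qed.

Lemma rank_onto p : p < #|T| -> exists x, rank x = p.
Proof.
move=> lt_pn.
pose r (x : T) : 'I_#|T| := Ordinal (rank_lt x).
have r_inj : injective r by move=> x y /(congr1 val) /rank_inj.
have /codomP [x /(congr1 val) /= ->] := inj_card_onto r_inj (eq_leq (card_ord _)) (Ordinal lt_pn).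
by exists x.
Qed.

End Rank.

Lemma fresh_color (T : eqType) (s t : seq T) : uniq s -> size t < size s ->
  exists2 c, c \in s & c \notin t.
Proof.
move=> uniq_s lt_ts.
case: (boolP (all (mem t) s)) => [/allP s_sub_t | /allPn [c c_s c_t]]; last by exists c.
by have := uniq_leq_size uniq_s s_sub_t; rewrite leqNgt lt_ts.
Qed.

Definition window_distinct (k n : nat) (g : nat -> nat) : Prop :=
  forall q p, q < p -> p < n -> p < q + k -> g p != g q.

(* Greedy colouring of positions 0, 1, ..., n-1 from lists of k colours:
   position p avoids the colours of the k-1 positions before it. *)
Lemma greedy_window_coloring (k n : nat) (Ls : nat -> seq nat) : 0 < k ->
  (forall p, p < n -> uniq (Ls p) /\ size (Ls p) = k) ->
  exists2 g : nat -> nat, (forall p, p < n -> g p \in Ls p) & window_distinct k n g.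
Proof.
move=> k_gt0; elim: n => [|n IHn] hLs; first by exists (fun=> 0) => // p q _; rewrite ltn0.
have [g g_in g_win] := IHn (fun p lt_pn => hLs p (ltnW lt_pn)).
have [uniq_n size_n] := hLs n (ltnSn n).
have [c c_in c_fresh] : exists2 c, c \in Ls n & c \notin [seq g q | q <- iota (n - k.-1) k.-1].
  by apply: fresh_color; rewrite // size_map size_iota size_n; lia.
exists (fun p => if p == n then c else g p).
  move=> p; rewrite ltnS leq_eqVlt => /orP [/eqP -> | lt_pn]; first by rewrite eqxx.
  by rewrite (ltn_eqF lt_pn) g_in.
move=> q p lt_qp; rewrite ltnS leq_eqVlt => /orP [/eqP eq_pn | lt_pn] near_qp.
  subst p; rewrite eqxx (ltn_eqF lt_qp).
  apply: contra c_fresh => /eqP ->; apply/mapP; exists q => //; rewrite mem_iota; lia.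
by rewrite (ltn_eqF lt_pn) (ltn_eqF (ltn_trans lt_qp lt_pn)) g_win.
Qed.

Lemma same_block_close (k p q : nat) : 0 < k -> p %/ k = q %/ k -> q < p -> p < q + k.
Proof.
move=> k_gt0 eq_block lt_qp.
have := divn_eq p k; have := divn_eq q k; have := ltn_pmod p k_gt0; have := ltn_pmod q k_gt0.
rewrite eq_block; lia.
Qed.

Lemma div_lt_ceil_div (k n p : nat) : 0 < k -> p < n -> p %/ k < ceil_div n k.
Proof.
move=> k_gt0 lt_pn; apply: (@leq_trans ((p + k) %/ k)).
  by rewrite divnDr ?dvdnn // divnn k_gt0 addn1.
by apply: leq_div2r; lia.
Qed.

(* A window-distinct colouring of n positions uses each colour at most
   ceil(n/k) times, since a colour meets each block of k positions once. *)
Lemma window_class_card (T : finType) (r : T -> nat) (g : nat -> nat) (k n c : nat) :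
  0 < k -> injective r -> (forall x, r x < n) -> window_distinct k n g ->
  #|[set x | g (r x) == c]| <= ceil_div n k.
Proof.
move=> k_gt0 r_inj r_lt g_win.
apply: (@card_le_bounded_inj _ _ (fun x => r x %/ k)); last first.
  by move=> x _; apply: div_lt_ceil_div.
have distinct q p : q < p -> p < n -> q %/ k = p %/ k -> g p != g q.
  move=> lt_qp lt_pn eq_block; apply: g_win => //.
  exact: same_block_close k_gt0 (esym eq_block) lt_qp.
move=> x y; rewrite !inE => /eqP gx /eqP gy eq_block; apply: r_inj.
case: (ltngtP (r x) (r y)) => // lt_r.
- by have := distinct _ _ lt_r (r_lt y) eq_block; rewrite gx gy eqxx.
- by have := distinct _ _ lt_r (r_lt x) (esym eq_block); rewrite gx gy eqxx.
Qed.

Definition layout_width (T : finType) (e : rel T) (code : T -> nat) (b : nat) : Prop :=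
  forall x y, e x y -> code x <= code y + b /\ code y <= code x + b.

(* A loopless graph with an injective layout of width less than k is
   equitably k-choosable: colour greedily in the order of the layout. *)
Lemma bandwidth_equitably_choosable (T : finType) (e : rel T) (k : nat) (code : T -> nat) :
  0 < k -> injective code -> (forall x y, e x y -> x != y) ->
  layout_width e code k.-1 -> equitably_k_choosable e k.
Proof.
move=> k_gt0 code_inj e_irr e_band L L_ok.
pose rk := rank code.
pose Ls p := oapp L [::] [pick x | rk x == p].
have Ls_rank x : Ls (rk x) = L x.
  by rewrite /Ls; case: pickP => [y /eqP /(rank_inj code_inj) -> | /(_ x)]; rewrite ?eqxx.
have [g g_in g_win] : exists2 g, (forall p, p < #|T| -> g p \in Ls p) & window_distinct k #|T| g.
  apply: greedy_window_coloring => // p /(rank_onto code_inj) [x <-].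
  by rewrite Ls_rank; apply: L_ok.
have rank_close x y : code x <= code y + k.-1 -> rk y < rk x -> rk x < rk y + k.
  move=> near_xy lt_yx; have lt_code : code y < code x by rewrite -(ltn_rank code_inj).
  by have := rank_span code_inj lt_code; rewrite /rk; lia.
exists (fun x => g (rk x)); split; [|split].
- move=> x y e_xy; have [near_xy near_yx] := e_band x y e_xy.
  case: (ltngtP (rk x) (rk y)) => [lt_xy | lt_yx | eq_r].
  + by rewrite eq_sym; apply: (g_win _ _ lt_xy (rank_lt _ _) (rank_close _ _ near_yx lt_xy)).
  + exact: (g_win _ _ lt_yx (rank_lt _ _) (rank_close _ _ near_xy lt_yx)).
  + by have := e_irr x y e_xy; rewrite (rank_inj code_inj eq_r) eqxx.
- by move=> x; rewrite -Ls_rank; apply: g_in; apply: rank_lt.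
- move=> c; apply: window_class_card g_win => //; [exact: rank_inj | exact: rank_lt].
Qed.

Lemma graph_sq_width (T : finType) (e : rel T) (code : T -> nat) (b : nat) :
  layout_width e code b -> layout_width (graph_sq e) code b.*2.
Proof.
move=> e_band x y /andP [_ /orP [/e_band | /existsP [z /andP [/e_band xz /e_band zy]]]].
- by lia.
- by move: xz zy; lia.
Qed.

Lemma divmod_uniq (d j j' c c' : nat) :
  j * d + c = j' * d + c' -> c < d -> c' < d -> j = j' /\ c = c'.
Proof.
move=> eq_jc lt_cd lt_c'd; have d_gt0 : 0 < d by lia.
split.
  by have := congr1 (divn^~ d) eq_jc; rewrite /= !divnMDl // !divn_small // !addn0.
by have := congr1 (modn^~ d) eq_jc; rewrite /= !modnMDl // !modn_small.
Qed.

(* The layout of B(l_1, ..., l_m): legs i < lanes go right, the others left;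
   [lane i] is the lane of leg i on its side, and the vertex at 0-based index
   j of leg i is at distance [depth] = j * lanes + lane i + 1 from the centre,
   which sits at [center], large enough for all left positions to be >= 0. *)
Section SpiderLayout.
Variables (m : nat) (l : 'I_m -> nat).

Definition lanes : nat := m.+1 %/ 2.

Definition right_leg (i : 'I_m) : bool := i < lanes.

Definition lane (i : 'I_m) : nat := if right_leg i then nat_of_ord i else i - lanes.

Definition depth (p : {i : 'I_m & 'I_(l i)}) : nat := tagged p * lanes + lane (tag p) + 1.

Definition center : nat := (\sum_(i < m) l i) * lanes.

Definition line_pos (x : spider_vertex l) : nat :=
  match x with
  | None => center
  | Some p => if right_leg (tag p) then center + depth p else center - depth p
  end.

(* lanes = ceil(m/2). *)
Lemma lanes_bounds : m <= lanes.*2 <= m.+1.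
Proof. rewrite /lanes; lia. Qed.

Lemma lane_lt i : lane i < lanes.
Proof.
have := lanes_bounds; have := ltn_ord i; rewrite /lane /right_leg.
by case: (ltnP i lanes); lia.
Qed.

Lemma lane_inj i i' : right_leg i = right_leg i' -> lane i = lane i' -> i = i'.
Proof.
rewrite /lane /right_leg => side lane_eq; apply: ord_inj; move: side lane_eq.
by case: (ltnP i lanes); case: (ltnP i' lanes); lia.
Qed.

Lemma depth_le_center p : depth p <= center.
Proof.
case: p => i j; rewrite /depth /center /=.
have l_le_sum : l i <= \sum_(i0 < m) l i0 by rewrite (bigD1 i) //= leq_addr.
have := lane_lt i.
have : (nat_of_ord j).+1 * lanes <= (\sum_(i0 < m) l i0) * lanes.
  by rewrite leq_mul2r (leq_trans (ltn_ord j) l_le_sum) orbT.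
set S := \sum_(i0 < m) l i0; rewrite mulSn; lia.
Qed.

Lemma depth_inj p q : right_leg (tag p) = right_leg (tag q) -> depth p = depth q -> p = q.
Proof.
case: p => i j; case: q => i' j' /= side; rewrite /depth /= => /addIn eq_depth.
have [eq_j eq_lane] := divmod_uniq eq_depth (lane_lt i) (lane_lt i').
have eq_i := lane_inj side eq_lane; subst i'.
by congr Tagged; apply: val_inj.
Qed.

Lemma depth_gt0 p : 0 < depth p.
Proof. by rewrite /depth addn1. Qed.

(* Distinct vertices get distinct positions: the centre is the only vertex at
   [center], and on each side of it the depth determines the vertex. *)
Lemma line_pos_inj : injective line_pos.
Proof.
have off_center p : line_pos (Some p) != center.
  rewrite /=; have := depth_gt0 p; have := depth_le_center p.
  by case: (right_leg (tag p)); lia.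
move=> [p|] [q|] /=; last by [].
- move=> eq_pos.
  have same_side : right_leg (tag p) = right_leg (tag q).
    move: eq_pos (depth_gt0 p) (depth_gt0 q) (depth_le_center p) (depth_le_center q).
    by case: (right_leg (tag p)); case: (right_leg (tag q)); lia.
  move: eq_pos; rewrite same_side => eq_pos; apply: f_equal; apply: depth_inj same_side _.
  move: eq_pos (depth_le_center p) (depth_le_center q).
  by case: (right_leg (tag q)); lia.
- by move=> eq_pos; have := off_center p; rewrite /= eq_pos eqxx.
- by move=> eq_pos; have := off_center q; rewrite /= -eq_pos eqxx.
Qed.

Lemma depth_leg_start p : nat_of_ord (tagged p) = 0 -> depth p <= lanes.
Proof. by move=> j0; rewrite /depth j0 mul0n add0n addn1; apply: lane_lt. Qed.

Lemma depth_leg_step p q : spider_adj (Some p) (Some q) ->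
  tag p = tag q /\ (depth q = depth p + lanes \/ depth p = depth q + lanes).
Proof.
case: p => i j; case: q => i' j' /= /andP [/eqP eq_i]; subst i'.
by rewrite /depth /= => /orP [/eqP <- | /eqP <-]; split => //; [left | right]; rewrite mulSn; lia.
Qed.

Lemma line_pos_width : layout_width (@spider_adj m l) line_pos lanes.
Proof.
case=> [p|]; case=> [q|] //= adj.
- have [eq_tag step] := depth_leg_step adj; rewrite eq_tag.
  by move: (depth_le_center p) (depth_le_center q); case: (right_leg (tag q)); lia.
- move: (depth_leg_start (eqP adj)) (depth_le_center p).
  by case: (right_leg (tag p)); lia.
- move: (depth_leg_start (eqP adj)) (depth_le_center q).
  by case: (right_leg (tag q)); lia.
Qed.

End SpiderLayout.

Theorem lemma2p3 (m : nat) (l : 'I_m -> nat)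
  (hm : 3 <= m)
  (hpos : forall i, 0 < l i)
  (hsorted : forall i j : 'I_m, i <= j -> l i <= l j)
  (k : nat) (hk : m + 3 <= k) :
  equitably_k_choosable (graph_sq (@spider_adj m l)) k.
Proof.
have k_gt0 : 0 < k by lia.
apply: (bandwidth_equitably_choosable k_gt0 (@line_pos_inj m l)).
- by move=> x y /andP [].
- move=> x y /(graph_sq_width (@line_pos_width m l)).
  by have := lanes_bounds m; lia.
Qed.
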